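(* Let $n\ge 2$, inputs $s_j\in\mathbb{Z}_{c_j}$, outputs $m_j\in\mathbb{Z}_d$ with $d$ prime, and let $F:\mathbb{Z}_{c_1}\times\cdots\times\mathbb{Z}_{c_n}\to\mathbb{Z}_d$ be any function. Then the set of non-signalling distributions $p(\mathbf{m}|\mathbf{s})$ whose correlator equals the deterministic correlator $p(k|\mathbf{s})=\delta^k_{F(\mathbf{s})}$ (a vertex of $\mathcal{P}$) is a face of the non-signalling polytope $\mathcal{NS}$.
   Context: Correlator of $p(\mathbf{m}|\mathbf{s})$: $p(k|\mathbf{s})=\sum_{\mathbf{m}:[\sum_j m_j]_d=k}p(\mathbf{m}|\mathbf{s})$, $[\cdot]_d$ reduction mod $d$. $\mathcal{P}$ is the convex polytope of all correlator families, with vertices the deterministic correlators $\delta^k_{F(\mathbf{s})}$. Non-signalling: for every subset $\mathcal{J}$ and inputs $\mathbf{s},\mathbf{s}'$ agreeing outside $\mathcal{J}$, $\sum_{(m_j)_{j\in\mathcal{J}}}p(\mathbf{m}|\mathbf{s})=\sum_{(m_j)_{j\in\mathcal{J}}}p(\mathbf{m}|\mathbf{s}')$. $\mathcal{NS}$ is the convex polytope of all non-signalling conditional distributions (nonnegative, normalised for each $\mathbf{s}$), viewed as vectors in a real space; a face is meant in the sense of convex polytopes. *)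

From HB Require Import structures.
From mathcomp Require Import all_boot all_order all_algebra.
Set Implicit Arguments. Unset Strict Implicit. Unset Printing Implicit Defensive.
Import Order.TTheory GRing.Theory Num.Theory.
Local Open Scope ring_scope.

Definition inputs (n : nat) (c : 'I_n -> nat) : finType :=
  {dffun forall j : 'I_n, 'I_(c j)}.

Definition outputs (n d : nat) : finType := {ffun 'I_n -> 'I_d}.

(* A family of conditional distributions p(m|s), seen as a real vector
   indexed by (s, m). *)
Definition cdist (R : realFieldType) (n : nat) (c : 'I_n -> nat) (d : nat) :=
  inputs c -> outputs n d -> R.

Definition is_cond_dist (R : realFieldType) (n : nat) (c : 'I_n -> nat) (d : nat) (p : cdist R c d) : Prop :=
  (forall s m, 0 <= p s m) /\ (forall s, \sum_(m : outputs n d) p s m = 1).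

(* Non-signalling: for every subset J of parties and inputs s, s' agreeing
   outside J, the marginal over (m_j)_{j in J} agrees, for every value of the
   remaining outputs (m_j)_{j notin J}. *)
Definition non_signalling (R : realFieldType) (n : nat) (c : 'I_n -> nat) (d : nat) (p : cdist R c d) : Prop :=
  forall (J : {set 'I_n}) (s s' : inputs c),
    (forall j : 'I_n, j \notin J -> s j = s' j) ->
    forall m : outputs n d,
      \sum_(m' : outputs n d | [forall j, (j \notin J) ==> (m' j == m j)]) p s m'
      = \sum_(m' : outputs n d | [forall j, (j \notin J) ==> (m' j == m j)]) p s' m'.

Definition NS (R : realFieldType) (n : nat) (c : 'I_n -> nat) (d : nat) (p : cdist R c d) : Prop :=
  is_cond_dist p /\ non_signalling p.

Definition correlator (R : realFieldType) (n : nat) (c : 'I_n -> nat) (d : nat) (p : cdist R c d) (s : inputs c) (k : 'I_d) : R :=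
  \sum_(m : outputs n d | ((\sum_(j < n) (m j : nat)) %% d)%N == (k : nat)) p s m.

Definition det_correlator (R : realFieldType) n (c : 'I_n -> nat) d (F : inputs c -> 'I_d)
  (s : inputs c) (k : 'I_d) : R := (k == F s)%:R.

Definition dotp (R : realFieldType) (n : nat) (c : 'I_n -> nat) (d : nat) (a p : cdist R c d) : R :=
  \sum_(s : inputs c) \sum_(m : outputs n d) a s m * p s m.

Definition is_face (R : realFieldType) (n : nat) (c : 'I_n -> nat) (d : nat) (P S : cdist R c d -> Prop) : Prop :=
  exists (a : cdist R c d) (b : R),
    (forall x, P x -> dotp a x <= b) /\
    (forall x, S x <-> (P x /\ dotp a x = b)).

From HB Require Import structures.
From mathcomp Require Import all_boot all_order all_algebra.
From mathcomp Require Import reals.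
Import Order.TTheory GRing.Theory Num.Theory.
Local Open Scope ring_scope.

(* The face is cut out by the functional [p |-> \sum_s p(F s | s)], which is
   bounded on NS by the number of inputs because each correlator is a
   probability vector on Z_d; equality forces p(F s | s) = 1 for every s,
   i.e. the deterministic correlator. *)

Section CorrelatorFace.
Context {R : realFieldType} {n : nat} {c : 'I_n -> nat} {d : nat}.
Hypothesis d_gt0 : (0 < d)%N.
Implicit Types (p : cdist R c d) (F : inputs c -> 'I_d).

Definition correlator_indicator F : cdist R c d :=
  fun s m => (((\sum_(j < n) (m j : nat)) %% d)%N == (F s : nat))%:R.

Lemma dotp_correlator_indicator F p :
  dotp (correlator_indicator F) p = \sum_s correlator p s (F s).
Proof.
apply: eq_bigr => s _; rewrite /correlator [RHS]big_mkcond /=.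
by apply: eq_bigr => m _; rewrite /correlator_indicator; case: ifP;
  rewrite ?mul1r ?mul0r.
Qed.

Lemma correlator_ge0 p s k : is_cond_dist p -> 0 <= correlator p s k.
Proof. by case=> p_ge0 _; apply: sumr_ge0 => m _; apply: p_ge0. Qed.

Lemma sum_correlator p s : is_cond_dist p -> \sum_k correlator p s k = 1.
Proof.
move=> [_ p_sum1]; rewrite -(p_sum1 s).
pose k_of (m : outputs n d) : 'I_d :=
  Ordinal (ltn_pmod (\sum_(j < n) (m j : nat)) d_gt0).
by rewrite (partition_big k_of (fun _ => true)).
Qed.

Lemma correlator_le1 p s k : is_cond_dist p -> correlator p s k <= 1.
Proof.
move=> hp; rewrite -(sum_correlator p s hp) (bigD1 k) //= lerDl.
by apply: sumr_ge0 => i _; apply: correlator_ge0.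
Qed.

Lemma correlator_eq1_delta p s k0 :
  is_cond_dist p -> correlator p s k0 = 1 ->
  forall k, correlator p s k = (k == k0)%:R.
Proof.
move=> hp pk0 k; have [->|k_neq] := eqVneq k k0; first by rewrite pk0.
have /eqP := sum_correlator p s hp; rewrite (bigD1 k0) //= pk0 -{2}(addr0 1).
move=> /eqP /addrI /psumr_eq0P -> //.
by move=> i _; apply: correlator_ge0.
Qed.

Lemma dotp_correlator_indicator_le F p :
  is_cond_dist p -> dotp (correlator_indicator F) p <= #|inputs c|%:R.
Proof.
move=> hp; rewrite dotp_correlator_indicator -sum1_card natr_sum.
by apply: ler_sum => s _; apply: correlator_le1.
Qed.

Lemma dotp_correlator_indicator_eq F p :
  is_cond_dist p ->
  dotp (correlator_indicator F) p = #|inputs c|%:R <->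
  forall s, correlator p s (F s) = 1.
Proof.
move=> hp; rewrite dotp_correlator_indicator -sum1_card natr_sum; split.
- move=> sum_eq; have : \sum_s (1 - correlator p s (F s)) = 0.
    by rewrite sumrB sum_eq subrr.
  move/psumr_eq0P=> gap0 s; apply/eqP; rewrite eq_sym -subr_eq0.
  by apply/eqP/gap0 => // s' _; rewrite subr_ge0 correlator_le1.
- by move=> pF1; apply: eq_bigr => s _; rewrite pF1.
Qed.

End CorrelatorFace.

Theorem proposition2p3p1 (R : realType) (n : nat) (c : 'I_n -> nat) (d : nat)
  (hn : (2 <= n)%N) (hd : prime d) (F : inputs c -> 'I_d) :
  is_face (NS (R := R) (d := d))
    (fun p : cdist R c d =>
       NS p /\ forall (s : inputs c) (k : 'I_d),
                 correlator p s k = det_correlator R F s k).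
Proof.
have d_gt0 := prime_gt0 hd.
exists (correlator_indicator F), #|inputs c|%:R; split.
  by move=> p [hp _]; apply: dotp_correlator_indicator_le.
move=> p; split=> [[NSp corrF] | [NSp dot_eq]]; split=> //.
  apply/(dotp_correlator_indicator_eq d_gt0 F p NSp.1) => s.
  by rewrite corrF /det_correlator eqxx.
have pF1 := (dotp_correlator_indicator_eq d_gt0 F p NSp.1).1 dot_eq.
by move=> s k; exact: correlator_eq1_delta d_gt0 _ _ _ NSp.1 (pF1 s) k.
Qed.
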